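(* Let $\mathbb{k}$ be an algebraically closed field of characteristic $0$, $r$ a positive integer and $\lambda\in\mathbb{k}^*\setminus\{\pm1\}$. Index rows by $(e,s)$ and columns by $(e',s')$ with $e,e'\in\{0,1\}$, $s,s'\in\{0,\dots,r-1\}$, ordered lexicographically. Then: (1) for every $a\in\mathbb{k}$, the $2r\times2r$ matrix $\big(\lambda^{(-1)^e(2s'+e')}(a+2s'+e')^s\big)$ is invertible; (2) for every $a\in\mathbb{k}$ and $b\in\mathbb{Q}$, the $2r\times2r$ matrix $\big(\lambda^{(-1)^e(b+2s'+e')}(a+2s'+e')^s\big)$ is invertible.
   Context: Convention: $0^0=1$. For $b\in\mathbb{Q}$, $\lambda^b$ denotes a fixed choice of $b$-th power of $\lambda$ (for $b=p/q$ in lowest terms, $\lambda^b=\mu^p$ for a fixed $\mu$ with $\mu^q=\lambda$), and $\lambda^{\pm(b+t)}:=(\lambda^b)^{\pm1}\lambda^{\pm t}$ for integers $t$. *)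

From HB Require Import structures.
From mathcomp Require Import all_boot all_order all_algebra all_field.
Set Implicit Arguments. Unset Strict Implicit. Unset Printing Implicit Defensive.
Import Order.TTheory GRing.Theory Num.Theory.
Local Open Scope ring_scope.

(* Rows/columns of a 2r x 2r matrix are indexed by i : 'I_(2*r); the
   lexicographic order on pairs (e,s) with e in {0,1}, s in {0..r-1}
   identifies i with (e,s) = (i %/ r, i %% r), i.e. i = e*r + s. *)

Definition lam_exp (e s' e' : nat) : int := (-1) ^+ e * ((2 * s' + e')%N)%:Z.

Definition mat1 (k : fieldType) (r : nat) (lam a : k) : 'M[k]_(2 * r) :=
  \matrix_(i < 2 * r, j < 2 * r)
    (lam ^ lam_exp (i %/ r) (j %% r) (j %/ r)
     * (a + ((2 * (j %% r) + j %/ r)%N)%:R) ^+ (i %% r)).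

(* lam^b for b : rat, given the fixed choice mu of a (denq b)-th root of lam:
   lam^b := mu^(numq b). *)
Definition ratpow (k : fieldType) (mu : k) (b : rat) : k := mu ^ numq b.

(* The matrix of part (2): entry (e,s),(e',s') is
   lam^((-1)^e (b+2s'+e')) * (a + 2s'+e')^s, where
   lam^(+-(b+t)) := (lam^b)^(+-1) lam^(+-t). *)
Definition mat2 (k : fieldType) (r : nat) (lam mu : k) (b : rat) (a : k)
  : 'M[k]_(2 * r) :=
  \matrix_(i < 2 * r, j < 2 * r)
    (ratpow mu b ^ ((-1) ^+ (i %/ r) : int)
     * lam ^ lam_exp (i %/ r) (j %% r) (j %/ r)
     * (a + ((2 * (j %% r) + j %/ r)%N)%:R) ^+ (i %% r)).

From HB Require Import structures.
From mathcomp Require Import all_boot all_order all_algebra all_field.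
From mathcomp Require Import ring.
Set Implicit Arguments. Unset Strict Implicit. Unset Printing Implicit Defensive.
Import Order.TTheory GRing.Theory Num.Theory.
Local Open Scope ring_scope.

(* Suppose v M = 0 for a nonzero row vector v, M the matrix of part (1).  Column (e', s')
   corresponds to t = 2s' + e' in [0, 2r), and the two halves e = 0, 1 of v are the
   coefficient vectors of polynomials P, Q of degree < r with
   λ^t P(a + t) + λ^(-t) Q(a + t) = 0, i.e. μ^t P(a + t) + Q(a + t) = 0 for μ = λ^2,
   which is neither 0 nor 1.  A forward difference in t preserves this shape, lowers the
   degree of Q and multiplies the leading coefficient of P by μ - 1 ≠ 0; by induction on
   deg Q this forces P = 0, and then Q = 0 since in characteristic 0 the points a + t are
   distinct.  The matrix of part (2) is that of part (1) multiplied on the left by the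
   invertible diagonal matrix with entries (λ^b)^(±1). *)

Lemma pchar0_natr_inj (R : idomainType) :
  [pchar R] =i pred0 -> injective (GRing.natmul (1 : R)).
Proof.
move=> /pcharf0P char0 i j eij.
wlog lij : i j eij / (i <= j)%N.
  by move=> W; case: (leqP i j) => [/W->//|/ltnW /(W j i (esym eij))->].
by apply/eqP; rewrite eqn_leq lij -subn_eq0 -char0 natrB // eij subrr eqxx.
Qed.

Lemma size_polyB_same_lead (R : nzRingType) (p q : {poly R}) : size p = size q ->
  lead_coef p = lead_coef q -> p != 0 -> (size (p - q)%R < size p)%N.
Proof.
move=> spq lpq p0; rewrite (polySpred p0) ltnS; apply/leq_sizeP => j.
rewrite leq_eqVlt => /orP[/eqP<- | ]; first by rewrite coefB -!lead_coefE spq lpq subrr.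
by move=> sj; rewrite coefB !nth_default ?subrr // -?spq (polySpred p0).
Qed.

Lemma lead_coef_comp_XaddC (R : idomainType) (c : R) (p : {poly R}) :
  lead_coef (p \Po ('X + c%:P)) = lead_coef p.
Proof. by rewrite lead_coef_comp ?size_XaddC // lead_coefXaddC expr1n mulr1. Qed.

Lemma size_shift_subr_leq (R : idomainType) m (q : {poly R}) : (size q <= m.+1)%N ->
  (size (q \Po ('X + 1) - q)%R <= m)%N.
Proof.
have sX1 : size ('X + 1 : {poly R}) = 2 by rewrite -polyC1 size_XaddC.
have [-> _|q0 sq] := eqVneq q 0; first by rewrite comp_poly0 subr0 size_poly0.
rewrite -ltnS; apply: leq_trans sq; rewrite -(size_comp_poly2 q sX1).
rewrite size_polyB_same_lead ?comp_poly2_eq0 ?size_comp_poly2 //.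
by rewrite -polyC1 lead_coef_comp_XaddC.
Qed.

Section ShiftedPolynomials.

Variable R : idomainType.
Hypothesis char0 : [pchar R] =i pred0.
Variable a : R.

Lemma poly_eq0_of_shifted_roots N (p : {poly R}) : (size p <= N)%N ->
  (forall t, (t < N)%N -> p.[a + t%:R] = 0) -> p = 0.
Proof.
move=> sp p_roots; apply: (@roots_geq_poly_eq0 _ _ [seq a + t%:R | t <- iota 0 N]).
- by apply/allP => x /mapP[t]; rewrite mem_iota => /andP[_ /p_roots/eqP] ? ->.
- by rewrite map_inj_uniq ?iota_uniq // => i j /addrI/(pchar0_natr_inj char0).
- by rewrite size_map size_iota.
Qed.

Lemma exp_poly_combination_eq0 (mu : R) : mu != 0 -> mu != 1 ->
  forall m n (p q : {poly R}), (size p <= n)%N -> (size q <= m)%N ->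
  (forall t, (t < n + m)%N -> mu ^+ t * p.[a + t%:R] + q.[a + t%:R] = 0) ->
  p = 0 /\ q = 0.
Proof.
move=> mu0 mu1; elim=> [|m IH] n p q sp sq vanish.
  have q0 : q = 0 by apply/size_poly_leq0P.
  split=> //; apply: (poly_eq0_of_shifted_roots sp) => t tn.
  move: (vanish t); rewrite q0 addn0 hornerC addr0 => /(_ tn)/eqP.
  by rewrite mulf_eq0 expf_eq0 (negPf mu0) andbF => /eqP.
set dp := mu *: (p \Po ('X + 1)) - p.
set dq := q \Po ('X + 1) - q.
have sdp : (size dp <= n)%N.
  rewrite (leq_trans (size_polyD _ _)) // geq_max size_polyN sp andbT.
  by rewrite (leq_trans (size_scale_leq _ _)) // size_comp_poly2 // -polyC1 size_XaddC.
have vanish_diff t : (t < n + m)%N -> mu ^+ t * dp.[a + t%:R] + dq.[a + t%:R] = 0.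
  move=> tnm; rewrite addnS in vanish.
  have e0 := vanish t (ltnW tnm); have e1 := vanish t.+1 tnm.
  rewrite !hornerE !horner_comp !hornerE -addrA natr1.
  transitivity ((mu ^+ t.+1 * p.[a + t.+1%:R] + q.[a + t.+1%:R])
                - (mu ^+ t * p.[a + t%:R] + q.[a + t%:R])); first by rewrite /= exprS; ring.
  by rewrite e0 e1 subrr.
have p0 : p = 0.
  have [dp0 _] := IH n dp dq sdp (size_shift_subr_leq sq) vanish_diff.
  move/eqP: dp0; rewrite subr_eq0 => /eqP/(congr1 lead_coef).
  rewrite lead_coefZ -polyC1 lead_coef_comp_XaddC => /eqP.
  rewrite -subr_eq0 -[X in _ - X]mul1r -mulrBl mulf_eq0 subr_eq0 (negPf mu1).
  by rewrite lead_coef_eq0 => /eqP.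
split=> //; apply: (@poly_eq0_of_shifted_roots (n + m.+1)).
  exact: leq_trans sq (leq_addl _ _).
by move=> t /vanish; rewrite p0 horner0 mulr0 add0r.
Qed.

End ShiftedPolynomials.

Section BlockMatrix.

Variables (k : fieldType) (r : nat).

Lemma divn_ord_lt2 (i : 'I_(2 * r)) : (i %/ r < 2)%N.
Proof. by case: r i => [|r'] i; rewrite ?divn0 // ltn_divLR // mulnC. Qed.

Definition half_poly (v : 'rV[k]_(2 * r)) (e : nat) : {poly k} :=
  \sum_(i < 2 * r | (i %/ r == e)%N) v 0 i *: 'X^(i %% r).

Lemma size_half_poly v e : (size (half_poly v e) <= r)%N.
Proof.
rewrite (leq_trans (size_sum _ _ _)) //; apply/bigmax_leqP => i _.
by rewrite (leq_trans (size_scale_leq _ _)) // size_polyXn ltn_mod; case: r i => [[]|].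
Qed.

Lemma coef_half_poly v (i : 'I_(2 * r)) : (half_poly v (i %/ r)%N)`_(i %% r) = v 0 i.
Proof.
rewrite coef_sum (bigD1 i) //= coefZ coefXn eqxx mulr1 big1 ?addr0 //.
move=> i' /andP[/eqP di ne].
rewrite coefZ coefXn; case: eqP => [mi|_]; last by rewrite mulr0.
by case/negP: ne; apply/eqP/val_inj; rewrite /= (divn_eq i' r) (divn_eq i r) di mi.
Qed.

Lemma exists_col_exponent t : (t < 2 * r)%N ->
  exists j : 'I_(2 * r), (2 * (j %% r) + j %/ r)%N = t.
Proof.
move=> t2r; have r0 : (0 < r)%N by case: r t2r => [|//]; rewrite muln0.
have t2 : (t %% 2 < 2)%N by rewrite ltn_mod.
have tr : (t %/ 2 < r)%N by rewrite ltn_divLR // mulnC.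
have jlt : ((t %% 2) * r + t %/ 2 < 2 * r)%N.
  rewrite (leq_trans (_ : _ < (t %% 2).+1 * r)%N) ?leq_mul2r ?t2 ?orbT //.
  by rewrite mulSn addnC ltn_add2r.
exists (Ordinal jlt); rewrite /= modnMDl modn_small // divnMDl // (divn_small tr).
by rewrite addn0 mulnC -divn_eq.
Qed.

Lemma mulmx_mat1 (lam a : k) v (j : 'I_(2 * r)) t : (2 * (j %% r) + j %/ r)%N = t ->
  (v *m mat1 r lam a) 0 j =
  lam ^+ t * (half_poly v 0).[a + t%:R] + (lam ^+ t)^-1 * (half_poly v 1).[a + t%:R].
Proof.
move=> jt; rewrite mxE (bigID (fun i : 'I_(2 * r) => i %/ r == 0)%N) /=.
rewrite !horner_sum !mulr_sumr.
have half1 (i : 'I_(2 * r)) : ~~ (i %/ r == 0)%N = (i %/ r == 1)%N.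
  by case: (i %/ r)%N (divn_ord_lt2 i) => [|[]].
congr (_ + _); first apply: eq_bigr => i /eqP i0.
  by rewrite !mxE /lam_exp i0 jt expr0 mul1r -exprnP hornerZ hornerXn mulrCA.
rewrite (eq_bigl _ _ half1); apply: eq_bigr => i /eqP i1.
by rewrite !mxE /lam_exp i1 jt expr1 mulN1r -exprnN hornerZ hornerXn mulrCA.
Qed.

Lemma mat1_unitmx (lam a : k) : [pchar k] =i pred0 -> lam != 0 -> lam ^+ 2 != 1 ->
  mat1 r lam a \in unitmx.
Proof.
move=> char0 lam0 lam2; rewrite unitmxE unitfE; apply/negP => /det0P[v v0 vM].
have vanish t : (t < r + r)%N ->
    (lam ^+ 2) ^+ t * (half_poly v 0).[a + t%:R] + (half_poly v 1).[a + t%:R] = 0.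
  rewrite addnn -mul2n => /exists_col_exponent[j jt].
  have := mulmx_mat1 lam a v jt; rewrite vM mxE => /(congr1 (fun x => lam ^+ t * x)).
  by rewrite mulr0 mulrDr mulrA -expr2 exprAC mulVKf ?expf_neq0.
have [P0 Q0] := exp_poly_combination_eq0 char0 (expf_neq0 2 lam0) lam2
  (size_half_poly v 0) (size_half_poly v 1) vanish.
case/negP: v0; apply/eqP/rowP => i; rewrite !mxE -coef_half_poly.
by case: (i %/ r)%N (divn_ord_lt2 i) => [|[|]] // _; rewrite ?P0 ?Q0 coef0.
Qed.

Lemma mat2_diag_mulmx (lam mu : k) b a : mat2 r lam mu b a =
  diag_mx (\row_(i < 2 * r) ratpow mu b ^ ((-1) ^+ (i %/ r)%N : int)) *m mat1 r lam a.
Proof. by rewrite mul_diag_mx; apply/matrixP => i j; rewrite !mxE mulrA. Qed.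

End BlockMatrix.

Theorem corollary2p14 (k : closedFieldType) (r : nat) (lam : k) :
  [pchar k] =i pred0 -> (0 < r)%N ->
  lam != 0 -> lam != 1 -> lam != -1 ->
  (forall a : k, mat1 r lam a \in unitmx) /\
  (forall (a : k) (b : rat) (mu : k), mu ^+ `|denq b|%N = lam ->
     mat2 r lam mu b a \in unitmx).
Proof.
move=> char0 _ lam0 lam1 lamN1.
have lam2 : lam ^+ 2 != 1 by rewrite sqrf_eq1 negb_or lam1.
split=> [a|a b mu lam_root]; first exact: mat1_unitmx.
have mu0 : mu != 0.
  by apply: contraNneq lam0 => mu0; rewrite -lam_root mu0 expr0n absz_eq0 denq_eq0.
rewrite mat2_diag_mulmx unitmx_mul mat1_unitmx // andbT unitmxE det_diag unitfE.
by apply/prodf_neq0 => i _; rewrite mxE !expfz_neq0.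
Qed.
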